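(* Let $(A,\sigma)$ be an algebra with involution over $K$, let $\varepsilon=\pm1$, and let $a,b\in A^\times$ be $\varepsilon$-symmetric (i.e. $\sigma(a)=\varepsilon a$, $\sigma(b)=\varepsilon b$). Then in $\widetilde{SW}(A,\sigma)$, \[ \langle a\rangle_\sigma\cdot\langle b\rangle_\sigma=T_{\sigma,a,b}, \] where $T_{\sigma,a,b}$ is the symmetric bilinear form $A\times A\to K$, $(x,y)\mapsto\mathrm{Trd}_A(\sigma(x)ay\sigma(b))$. In particular $\langle1\rangle_\sigma\cdot\langle a\rangle_\sigma=T_{\sigma,a}$, where $T_{\sigma,a}=T_{\sigma,1,a}$.
   Context: $K$ is a field of characteristic different from 2; $(A,\sigma)$ is a finite-dimensional central simple $K$-algebra $A$ with a $K$-linear anti-automorphism $\sigma$, $\sigma^2=\mathrm{Id}$; $\mathrm{Trd}_A$ is the reduced trace. For $\varepsilon$-symmetric $a\in A^\times$, $\langle a\rangle_\sigma$ denotes the $\varepsilon$-hermitian module $A$ (right $A$-module) with form $(x,y)\mapsto\sigma(x)ay$. For $\varepsilon$-hermitian modules $(V_1,h_1),(V_2,h_2)$ over $(A,\sigma)$, their product in the mixed Witt semi-ring $\widetilde{SW}(A,\sigma)$ is the symmetric bilinear $K$-space on $(V_1\otimes_KV_2)\otimes_{A\otimes_KA}A$, where $A\otimes_KA$ acts on the left of $A$ by $(c\otimes d)\cdot x=cx\sigma(d)$, with form $(u_1\otimes u_2\otimes c,v_1\otimes v_2\otimes d)\mapsto\mathrm{Trd}_A(\sigma(c)h_1(u_1,v_1)d\,\sigma(h_2(u_2,v_2)))$,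 considered up to isometry. *)

From HB Require Import structures.
From mathcomp Require Import all_boot all_order all_algebra.
From mathcomp Require Import vector falgebra.
Set Implicit Arguments. Unset Strict Implicit. Unset Printing Implicit Defensive.
Import Order.TTheory GRing.Theory Num.Theory.
Local Open Scope ring_scope.

Section Defs.
Variables (K : fieldType) (A : falgType K).

Definition Klinear (U W : vectType K) (f : U -> W) : Prop :=
  forall (k : K) (x y : U), f (k *: x + y) = k *: f x + f y.

Definition Klinear_form (U : vectType K) (f : U -> K) : Prop :=
  forall (k : K) (x y : U), f (k *: x + y) = k * f x + f y.

Definition central_alg : Prop :=
  forall z : A, (forall x : A, z * x = x * z) -> exists k : K, z = k%:A.

(* A is simple: the only two-sided ideals are 0 and A (A <> 0 since A is a
   non-trivial ring) *)
Definition simple_alg : Prop :=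
  forall I : {vspace A},
    (forall x y : A, y \in I -> (x * y \in I) && (y * x \in I)) ->
    I = 0%VS \/ I = fullv.

Definition is_involution (sigma : A -> A) : Prop :=
  [/\ Klinear sigma,
      (forall x y : A, sigma (x * y) = sigma y * sigma x) &
      (forall x : A, sigma (sigma x) = x)].

Definition lmul_char_poly (x : A) : {poly K} :=
  char_poly (passmx.mxof (vbasis fullv) (vbasis fullv) (amull x)).

(* trd is the reduced trace: for every x, the reduced characteristic
   polynomial Prd_x is the (unique) monic polynomial of degree n = deg A with
   Prd_x ^ n = charpoly(L_x), and Trd(x) = - (coefficient of X^(n-1) in Prd_x). *)
Definition is_reduced_trace (trd : A -> K) : Prop :=
  forall x : A, exists (n : nat) (p : {poly K}),
    [/\ (n * n)%N = \dim (fullv : {vspace A}),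
        p \is monic, size p = n.+1,
        p ^+ n = lmul_char_poly x &
        trd x = - p`_n.-1].

(* the epsilon-hermitian form of <a>_sigma on the right A-module A *)
Definition diag_herm (sigma : A -> A) (a : A) : A -> A -> A :=
  fun x y => sigma x * a * y.

Definition trilinear (W : vectType K) (g : A -> A -> A -> W) : Prop :=
  [/\ forall u2 x, Klinear (fun u1 => g u1 u2 x),
      forall u1 x, Klinear (fun u2 => g u1 u2 x) &
      forall u1 u2, Klinear (fun x => g u1 u2 x)].

(* g is balanced for the A (x)_K A-actions: right action on V1 (x) V2 by
   (u1 (x) u2).(c (x) d) = u1 c (x) u2 d, left action on A by
   (c (x) d).x = c x sigma(d) (pure tensors c (x) d generate A (x)_K A) *)
Definition balanced (sigma : A -> A) (W : vectType K)
    (g : A -> A -> A -> W) : Prop :=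
  forall u1 u2 c d x : A, g (u1 * c) (u2 * d) x = g u1 u2 (c * x * sigma d).

(* (P, t) is the tensor product (V1 (x)_K V2) (x)_{A (x)_K A} A with
   V1 = V2 = A, presented by its universal property, and B : P x P -> K is the
   form of the product in the mixed Witt semiring:
   B(u1(x)u2(x)c, v1(x)v2(x)d) = Trd(sigma(c) h1(u1,v1) d sigma(h2(u2,v2))). *)
Definition is_mixed_product (sigma : A -> A) (trd : A -> K)
    (h1 h2 : A -> A -> A) (P : vectType K) (t : A -> A -> A -> P)
    (B : P -> P -> K) : Prop :=
  [/\ trilinear t /\ balanced sigma t,
      (forall (W : vectType K) (g : A -> A -> A -> W),
          trilinear g -> balanced sigma g ->
          exists f : P -> W, Klinear f /\
            forall u1 u2 x, f (t u1 u2 x) = g u1 u2 x),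
      (forall p : P, exists s : seq (A * A * A),
          p = \sum_(w <- s) t w.1.1 w.1.2 w.2),
      ((forall q : P, Klinear_form (fun p => B p q)) /\
       (forall p : P, Klinear_form (fun q => B p q))) &
      (forall u1 u2 c v1 v2 d : A,
          B (t u1 u2 c) (t v1 v2 d) =
          trd (sigma c * h1 u1 v1 * d * sigma (h2 u2 v2)))].

Definition T_form (sigma : A -> A) (trd : A -> K) (a b : A) : A -> A -> K :=
  fun x y => trd (sigma x * a * y * sigma b).

Definition isometric (P Q : vectType K) (B : P -> P -> K) (C : Q -> Q -> K)
  : Prop :=
  exists f : P -> Q, [/\ Klinear f, bijective f &
                         forall p q : P, C (f p) (f q) = B p q].
End Defs.

From HB Require Import structures.
From mathcomp Require Import all_boot all_order all_algebra.
From mathcomp Require Import vector falgebra.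
Import GRing.Theory.
Local Open Scope ring_scope.

(* By balancedness every generator t u1 u2 x equals t 1 1 (u1 x sigma(u2)),
   so x |-> t 1 1 x is onto; the balanced trilinear map
   (u1, u2, x) |-> u1 x sigma(u2) factors through t and inverts it.  Under this
   identification B(t 1 1 x, t 1 1 y) = Trd(sigma(x) h1(1,1) y sigma(h2(1,1))),
   and h(1,1) = a for h = <a>_sigma.  No property of Trd, of eps or of A beyond
   associativity is needed. *)

Section KlinearTheory.
Context {K : fieldType} {U W : vectType K} {f : U -> W}.
Hypothesis f_lin : Klinear f.

Lemma Klinear0 : f 0 = 0.
Proof.
have := f_lin 1 0 0; rewrite scaler0 add0r scale1r => f0.
by apply: (@addrI _ (f 0)); rewrite addr0 -f0.
Qed.

Lemma KlinearD (x y : U) : f (x + y) = f x + f y.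
Proof. by have := f_lin 1 x y; rewrite !scale1r. Qed.

Lemma Klinear_sum (I : Type) (s : seq I) (F : I -> U) :
  f (\sum_(i <- s) F i) = \sum_(i <- s) f (F i).
Proof. exact: (big_morph f KlinearD Klinear0). Qed.

End KlinearTheory.

Section MixedProduct.
Context {K : fieldType} {A : falgType K} {sigma : A -> A}.
Hypothesis sigma_inv : is_involution sigma.

Lemma involution1 : sigma 1 = 1.
Proof.
case: sigma_inv => _ sigmaM sigmaK.
by have := sigmaM (sigma 1) 1; rewrite !mulr1 !sigmaK mulr1.
Qed.

Definition sandwich (u1 u2 x : A) : A := u1 * x * sigma u2.

Lemma sandwich_trilinear : trilinear sandwich.
Proof.
case: sigma_inv => sigma_lin _ _.
split=> [u2 x k y z|u1 x k y z|u1 u2 k y z]; rewrite /sandwich.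
- by rewrite !mulrDl -!scalerAl.
- by rewrite sigma_lin mulrDr -scalerAr.
- by rewrite mulrDr !mulrDl -scalerAr -scalerAl.
Qed.

Lemma sandwich_balanced : balanced sigma sandwich.
Proof. by case: sigma_inv => _ sigmaM _ u1 u2 c d x; rewrite /sandwich sigmaM !mulrA. Qed.

Context {trd : A -> K} {h1 h2 : A -> A -> A}.
Context {P : vectType K} {t : A -> A -> A -> P} {B : P -> P -> K}.
Hypothesis tB : is_mixed_product sigma trd h1 h2 t B.

Lemma mixed_tensor_sandwich (u1 u2 x : A) : t u1 u2 x = t 1 1 (sandwich u1 u2 x).
Proof.
case: tB => [[_ t_bal] _ _ _ _].
by rewrite -[u1]mul1r -[u2]mul1r t_bal !mul1r.
Qed.

Lemma mixed_product_sandwich :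
  exists f : P -> A, [/\ Klinear f,
    forall x, f (t 1 1 x) = x & forall p, t 1 1 (f p) = p].
Proof.
case: tB => [[[_ _ t_lin] _] univ t_span _ _].
have [f [f_lin f_t]] := univ _ _ sandwich_trilinear sandwich_balanced.
have f_t11 x : f (t 1 1 x) = x.
  by rewrite f_t /sandwich involution1 mul1r mulr1.
exists f; split=> // p; have [s ->] := t_span p.
rewrite (Klinear_sum f_lin) (Klinear_sum (t_lin 1 1)).
by apply: eq_bigr => w _; rewrite f_t -mixed_tensor_sandwich.
Qed.

Lemma mixed_product_isometric_T : isometric B (T_form sigma trd (h1 1 1) (h2 1 1)).
Proof.
have [f [f_lin f_t11 t11_f]] := mixed_product_sandwich.
case: tB => _ _ _ _ B_t.
exists f; split=> //; first by exists (t 1 1).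
by move=> p q; rewrite -{2}(t11_f p) -{2}(t11_f q) B_t.
Qed.

End MixedProduct.

Theorem mainTheorem9 (K : fieldType) (A : falgType K)
  (charK : (2%:R : K) != 0)
  (hcent : central_alg A) (hsimple : simple_alg A)
  (sigma : A -> A) (hsigma : is_involution sigma)
  (trd : A -> K) (htrd : is_reduced_trace trd)
  (eps : K) (heps : eps = 1 \/ eps = -1)
  (a b : A) (ha : a \is a GRing.unit) (hb : b \is a GRing.unit)
  (hasym : sigma a = eps *: a) (hbsym : sigma b = eps *: b)
  (P : vectType K) (t : A -> A -> A -> P) (B : P -> P -> K)
  (hP : is_mixed_product sigma trd (diag_herm sigma a) (diag_herm sigma b) t B) :
  isometric B (T_form sigma trd a b).
Proof.
have diag_herm11 c : diag_herm sigma c 1 1 = c.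
  by rewrite /diag_herm (involution1 hsigma) mul1r mulr1.
by have := mixed_product_isometric_T hsigma hP; rewrite !diag_herm11.
Qed.
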